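(* Let $m\geq 2$ be an integer and let $\delta$ be a real number with $0\leq\delta\leq \frac{1}{4m}\left(1-\frac{2}{2^m-1}\right)$. Then there exists a sequence of binary $[[n_i,k_i,d_i]]$ stabilizer codes such that $\lim_{i\to\infty}n_i=\infty$, $$\liminf_{i\to\infty}\frac{k_i}{n_i}\geq R_m^{(1)}(\delta):=1-\frac{2}{2^m-1}-4m\delta,\qquad \liminf_{i\to\infty}\frac{d_i}{n_i}\geq\delta.$$
   Context: A binary $[[n,k,d]]$ stabilizer code is given by an $(n+k)$-dimensional subspace $C\subseteq\mathbf{F}_2^{2n}$ with $C^{\perp\mathrm s}\subseteq C$, where $\langle\vec x,\vec y\rangle_{\mathrm s}=\sum_{i=1}^n x_iy_{n+i}-\sum_{i=1}^n x_{n+i}y_i$ and $C^{\perp\mathrm s}$ is the orthogonal complement of $C$ with respect to this form; its minimum distance $d$ is $\min\{w(\vec x)\mid \vec x\in C\setminus C^{\perp\mathrm s}\}$ with $w(\vec x)=\#\{1\le i\le n\mid (x_i,x_{n+i})\neq(0,0)\}$. *)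

From HB Require Import structures.
From mathcomp Require Import all_boot all_order all_algebra.
From mathcomp Require Import all_classical all_reals all_analysis.
Set Implicit Arguments. Unset Strict Implicit. Unset Printing Implicit Defensive.
Import Order.TTheory GRing.Theory Num.Theory.
Local Open Scope ring_scope.

(* Vectors of F_2^{2n} are row vectors 'rV['F_2]_(n + n); coordinate i of
   the "X-part" is x 0 (lshift n i), coordinate n+i is x 0 (rshift n i). *)
Notation F2 := 'F_2.

Definition symp {n : nat} (x y : 'rV[F2]_(n + n)) : F2 :=
  \sum_(i < n) (x 0 (lshift n i) * y 0 (rshift n i)
                - x 0 (rshift n i) * y 0 (lshift n i)).

Definition in_symp_compl {n : nat} (C : {vspace 'rV[F2]_(n + n)})
    (y : 'rV[F2]_(n + n)) : Prop :=
  forall x, x \in C -> symp x y = 0.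

Definition sweight {n : nat} (x : 'rV[F2]_(n + n)) : nat :=
  #|[set i : 'I_n | (x 0 (lshift n i) != 0) || (x 0 (rshift n i) != 0)]|.

Definition is_stabilizer_code (n k d : nat) (C : {vspace 'rV[F2]_(n + n)}) : Prop :=
  [/\ \dim C = (n + k)%N,
      (forall y, in_symp_compl C y -> y \in C),
      (exists2 x, (x \in C /\ ~ in_symp_compl C x) & sweight x = d) &
      (forall x, x \in C -> ~ in_symp_compl C x -> leq d (sweight x))].

Definition stabilizer_code_exists (n k d : nat) : Prop :=
  exists C : {vspace 'rV[F2]_(n + n)}, @is_stabilizer_code n k d C.

From HB Require Import structures.
From mathcomp Require Import all_boot all_order all_algebra.
From mathcomp Require Import all_classical all_reals all_analysis.
From mathcomp Require Import zify ring lra.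
Import Order.TTheory GRing.Theory Num.Theory.

(* Gilbert-Varshamov argument for CSS codes.  For G : 'M_(u + k, n) with top
   block U (its first u rows), C = rowspace G x U^perp contains its symplectic
   complement, which is rowspace U x (rowspace G)^perp, and has dimension at
   least n + k.  Every nonzero element of C has symplectic weight > t as soon as
   no nonzero combination of the rows of G and no nonzero vector of U^perp has
   Hamming weight <= t.  Counting matrices shows that a random G has both
   properties when 2^(u+k) V << 2^n and V << 2^u, V being the volume of the
   Hamming ball of radius t; so u ~ log2 V and k ~ n - 2 log2 V.  With
   t = floor (delta n), V (4^m)^(n-t) <= (4^m + 1)^n gives
   log2 V <= 2 m delta n + 3 n / 4^m, and since 6 / 4^m < 2 / (2^m - 1) the
   rate k/n exceeds 1 - 2/(2^m - 1) - 4 m delta for large n. *)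

Set Implicit Arguments. Unset Strict Implicit. Unset Printing Implicit Defensive.
Local Open Scope ring_scope.

Lemma F2_neq0 (x : F2) : x != 0 -> x = 1.
Proof. by case: x => [[|[|i]]] //= Hi _; apply: val_inj. Qed.

Lemma rowF2_neq0 n (c : 'rV[F2]_n) : c != 0 -> exists i, c 0 i = 1.
Proof.
move=> cn0; have [i ci|c0] := pickP (fun i => c 0 i != 0).
  by exists i; apply: F2_neq0.
by case/eqP: cn0; apply/rowP => i; rewrite mxE; apply/eqP/negbFE/c0.
Qed.

Definition hweight {n} (y : 'rV[F2]_n) : nat := #|[set j | y 0 j != 0]|.

Definition hamming_ball n t : {set 'rV[F2]_n} := [set y | (hweight y <= t)%N].

Lemma hweight0 n : hweight (0 : 'rV[F2]_n) = 0%N.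
Proof.
by apply/eqP; rewrite cards_eq0; apply/eqP/finset.setP => j; rewrite !inE mxE eqxx.
Qed.

Lemma hweight_le_sweightl n (x y : 'rV[F2]_n) : (hweight x <= sweight (row_mx x y))%N.
Proof.
by apply: subset_leq_card; apply/fintype.subsetP => i; rewrite !inE row_mxEl => ->.
Qed.

Lemma hweight_le_sweightr n (x y : 'rV[F2]_n) : (hweight y <= sweight (row_mx x y))%N.
Proof.
apply: subset_leq_card; apply/fintype.subsetP => i.
by rewrite !inE row_mxEr => ->; rewrite orbT.
Qed.

Lemma sweight_le n (x : 'rV[F2]_(n + n)) : (sweight x <= n)%N.
Proof. by rewrite -[X in (_ <= X)%N]card_ord max_card. Qed.

Lemma symp0r n (x : 'rV[F2]_(n + n)) : symp x 0 = 0.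
Proof. by rewrite /symp big1 // => i _; rewrite !mxE !mulr0 subrr. Qed.

Lemma symp_row_mx n (x y p q : 'rV[F2]_n) :
  symp (row_mx x y) (row_mx p q) = (x *m q^T) 0 0 - (y *m p^T) 0 0.
Proof.
rewrite /symp sumrB !mxE; congr (_ + - _); apply: eq_bigr => i _;
by rewrite ?row_mxEl ?row_mxEr mxE.
Qed.

Lemma stabilizer_code_exists_gt n k t (C : {vspace 'rV[F2]_(n + n)}) :
  \dim C = (n + k)%N -> (forall y, in_symp_compl C y -> y \in C) ->
  (exists x, x \in C /\ ~ in_symp_compl C x) ->
  (forall x, x \in C -> x != 0 -> (t < sweight x)%N) ->
  exists d, stabilizer_code_exists n k d /\ (t < d <= n)%N.
Proof.
move=> dimC complC [x1 [Cx1 nx1]] wC.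
pose P d := `[< exists x, (x \in C /\ ~ in_symp_compl C x) /\ sweight x = d >].
have exP : exists d, P d by exists (sweight x1); apply/asboolP; exists x1.
case: (ex_minnP exP) => d /asboolP [x [[Cx nx] <-]] mind.
have xn0 : x != 0.
  by apply/eqP => x0; apply: nx => z _; rewrite x0 symp0r.
exists (sweight x); split; last by rewrite wC //= sweight_le.
exists C; split => //; first by exists x.
by move=> y Cy ny; apply: mind; apply/asboolP; exists y.
Qed.

Lemma sub_orth_orth n r (U : 'M[F2]_(r, n)) (p : 'rV[F2]_n) :
  (forall y : 'rV_n, y *m U^T = 0 -> y *m p^T = 0) -> (p <= U)%MS.
Proof.
move=> orthp; set K := kermx U^T.
have KU : K *m U^T = 0 := mulmx_ker _.
have Kp : K *m p^T = 0.
  apply/row_matrixP => i; rewrite row_mul row0; apply: orthp.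
  by rewrite -row_mul KU row0.
have pK : (p <= kermx K^T)%MS by rewrite sub_kermx -[p]trmxK -trmx_mul Kp trmx0.
have UK : (U <= kermx K^T)%MS by rewrite sub_kermx -[U]trmxK -trmx_mul KU trmx0.
have rkK : \rank (kermx K^T) = \rank U.
  rewrite mxrank_ker mxrank_tr /K mxrank_ker mxrank_tr subKn //.
  exact: rank_leq_col.
have [_ /esym] := mxrank_leqif_sup UK; rewrite rkK eqxx => KU'.
exact: submx_trans pK KU'.
Qed.

Section CSSCode.
Variables (n u k : nat) (G : 'M[F2]_(u + k, n)).

Definition css_X : {vspace 'rV[F2]_n} := limg (linfun (mulmxr G)).
Definition css_Z : {vspace 'rV[F2]_n} :=
  lker (linfun (mulmxr (usubmx G)^T) : 'Hom(_, 'rV[F2]_u)).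
Definition css_code : {vspace 'rV[F2]_(n + n)} :=
  (linfun (mulmxr (row_mx 1%:M 0)) @: css_X
   + linfun (mulmxr (row_mx 0 1%:M)) @: css_Z)%VS.

Lemma mem_css_X x : reflect (exists c, x = c *m G) (x \in css_X).
Proof.
apply: (iffP memv_imgP) => [[c _ ->]|[c ->]]; exists c; rewrite ?memvf //;
by rewrite lfunE.
Qed.

Lemma mem_css_Z y : (y \in css_Z) = (y *m (usubmx G)^T == 0).
Proof. by rewrite memv_ker lfunE. Qed.

Lemma row_css_X r : row r G \in css_X.
Proof. by apply/mem_css_X; exists (delta_mx 0 r); rewrite -rowE. Qed.

Lemma mem_css_code v :
  reflect (exists x y, [/\ x \in css_X, y \in css_Z & v = row_mx x y])
          (v \in css_code).
Proof.
have embE (x y : 'rV[F2]_n) : x *m row_mx 1%:M 0 + y *m row_mx 0 1%:M = row_mx x y.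
  by rewrite !mul_mx_row !mulmx1 !mulmx0 add_row_mx addr0 add0r.
apply: (iffP memv_addP) => [[_ /memv_imgP[x Xx ->] [_ /memv_imgP[y Zy ->] ->]]|].
  by exists x, y; rewrite !lfunE embE.
case=> x [y [Xx Zy ->]].
exists (linfun (mulmxr (row_mx 1%:M 0)) x); first exact: memv_img.
exists (linfun (mulmxr (row_mx 0 1%:M)) y); first exact: memv_img.
by rewrite !lfunE embE.
Qed.

Lemma css_code_row_mx x y : x \in css_X -> y \in css_Z -> row_mx x y \in css_code.
Proof. by move=> Xx Zy; apply/mem_css_code; exists x, y. Qed.

(* (U^perp)^perp = rowspace U, a subspace of css_X. *)
Lemma css_orth_Z_sub (p q : 'rV[F2]_n) :
  (forall y, y \in css_Z -> symp (row_mx 0 y) (row_mx p q) = 0) ->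
  exists D, p = row_mx D 0 *m G.
Proof.
move=> orthp; have /submxP [D ->] : (p <= usubmx G)%MS.
  apply: sub_orth_orth => y yU; apply/rowP => i; rewrite ord1 [RHS]mxE.
  have := orthp y; rewrite symp_row_mx mul0mx mxE sub0r mem_css_Z yU eqxx.
  by move=> /(_ isT) /eqP; rewrite oppr_eq0 => /eqP.
by exists D; rewrite -[in RHS](vsubmxK G) mul_row_col mul0mx addr0.
Qed.

Lemma css_compl_sub w : in_symp_compl css_code w -> w \in css_code.
Proof.
rewrite -(hsubmxK w); set p := lsubmx w; set q := rsubmx w => orthw.
apply: css_code_row_mx.
  have [D ->] : exists D, p = row_mx D 0 *m G.
    by apply: (@css_orth_Z_sub _ q) => y Zy; apply/orthw/css_code_row_mx/Zy/mem0v.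
  by apply/mem_css_X; eexists.
rewrite mem_css_Z; apply/eqP/rowP => j; rewrite [RHS]mxE.
have := orthw _ (css_code_row_mx (row_css_X (lshift k j)) (mem0v _)).
rewrite symp_row_mx mul0mx [in X in _ - X]mxE subr0 => <-.
by rewrite !mxE; apply: eq_bigr => i _; rewrite !mxE mulrC.
Qed.

Lemma dim_css_Z : (n - u <= \dim css_Z)%N.
Proof.
pose f : 'Hom('rV[F2]_n, 'rV[F2]_u) := linfun (mulmxr (usubmx G)^T).
have := limg_ker_dim f fullv; have := dimvS (subvf (limg f)).
rewrite capfv !dimvf !dim_matrix !mul1r /css_Z -/f => im_le ker_im.
move: (\dim (lker f)) (\dim (limg f)) ker_im im_le => ker im; lia.
Qed.

Variable t : nat.
Hypothesis wt_X : forall c : 'rV[F2]_(u + k), c != 0 -> (t < hweight (c *m G))%N.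
Hypothesis wt_Z :
  forall x : 'rV[F2]_n, x != 0 -> (hweight x <= t)%N -> x *m (usubmx G)^T != 0.

Lemma mulmx_G_eq0 (c : 'rV[F2]_(u + k)) : c *m G = 0 -> c = 0.
Proof.
move=> cG0; apply/eqP; apply: contraTT isT => /wt_X.
by rewrite cG0 hweight0.
Qed.

Lemma css_code_weight v : v \in css_code -> v != 0 -> (t < sweight v)%N.
Proof.
case/mem_css_code => _ [y [/mem_css_X [c ->] Zy ->]] vn0.
have [c0|cn0] := eqVneq c 0; last first.
  exact: leq_trans (wt_X cn0) (hweight_le_sweightl _ _).
have yn0 : y != 0 by apply: contraNneq vn0 => ->; rewrite c0 mul0mx row_mx0.
apply: leq_trans (hweight_le_sweightr _ _); rewrite ltnNge.
by apply: contraL Zy => /(wt_Z yn0); rewrite mem_css_Z.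
Qed.

Hypothesis k_gt0 : (0 < k)%N.

(* A row of G outside its top block U gives an X-type logical operator. *)
Lemma css_code_not_self_orth :
  exists x, x \in css_code /\ ~ in_symp_compl css_code x.
Proof.
pose r := rshift u (Ordinal k_gt0).
exists (row_mx (row r G) 0).
split; first exact: css_code_row_mx (row_css_X r) (mem0v _).
move=> orth_r; have [D HD] : exists D, row r G = row_mx D 0 *m G.
  by apply: (@css_orth_Z_sub _ 0) => y Zy; apply/orth_r/css_code_row_mx/Zy/mem0v.
have : (row_mx D 0 - delta_mx 0 r) *m G = 0 by rewrite mulmxBl -rowE HD subrr.
move/mulmx_G_eq0/rowP/(_ r); rewrite mxE row_mxEr !mxE sub0r => /eqP.
by rewrite !eqxx mulr1n oppr_eq0 oner_eq0.
Qed.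

Lemma dim_css_X : \dim css_X = (u + k)%N.
Proof.
rewrite limg_dim_eq ?dimvf; first exact: mul1n.
apply/eqP; rewrite -subv0; apply/subvP => c /memv_capP [_].
by rewrite memv_ker lfunE memv0 /= => /eqP /mulmx_G_eq0 ->.
Qed.

Lemma dim_css_code : (n + k <= \dim css_code)%N.
Proof.
have emb_dim (f : 'Hom('rV[F2]_n, 'rV[F2]_(n + n))) (W : {vspace 'rV[F2]_n}) :
    (forall x, f x = 0 -> x = 0) -> \dim (f @: W) = \dim W.
  move=> f_inj; apply: limg_dim_eq; apply/eqP; rewrite -subv0.
  by apply/subvP => x /memv_capP [_]; rewrite memv_ker memv0 => /eqP /f_inj ->.
have cap0 : (linfun (mulmxr (row_mx 1%:M 0)) @: css_X
             :&: linfun (mulmxr (row_mx 0 1%:M)) @: css_Z = 0)%VS.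
  apply/eqP; rewrite -subv0; apply/subvP => w.
  case/memv_capP => /memv_imgP [x _ ->] /memv_imgP [y _].
  rewrite !lfunE /= !mul_mx_row !mulmx1 !mulmx0.
  by case/eq_row_mx => -> _; rewrite row_mx0 memv0.
have := dimv_sum_cap (linfun (mulmxr (row_mx 1%:M 0)) @: css_X)
                     (linfun (mulmxr (row_mx 0 1%:M)) @: css_Z).
rewrite cap0 dimv0 addn0 !emb_dim => [->||]; first last.
- by move=> x; rewrite lfunE /= mul_mx_row mulmx1 mulmx0 -row_mx0 => /eq_row_mx [].
- by move=> x; rewrite lfunE /= mul_mx_row mulmx1 mulmx0 -row_mx0 => /eq_row_mx [].
have := dimvS (subvf css_X); rewrite dimvf dim_matrix dim_css_X.
have := dim_css_Z; lia.
Qed.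

Lemma css_stabilizer_code :
  exists kk d, stabilizer_code_exists n kk d /\
    [/\ (k <= kk <= n)%N & (t < d <= n)%N].
Proof.
have dimC := dim_css_code.
have dimC_le : (\dim css_code <= n + n)%N.
  by have := dimvS (subvf css_code); rewrite dimvf dim_matrix mul1r.
have [d [code td]] := @stabilizer_code_exists_gt n (\dim css_code - n) t css_code
  ltac:(lia) css_compl_sub css_code_not_self_orth css_code_weight.
by exists (\dim css_code - n)%N, d; split => //; split => //; lia.
Qed.

End CSSCode.

(* All fibres of a surjective additive map are translates of its kernel. *)
Lemma card_preimset_additive (V W : finZmodType) (f : V -> W) (S : {set W}) :
  {morph f : x y / x + y} -> (forall w, exists v, f v = w) ->
  (#|f @^-1: S| * #|W| = #|S| * #|V|)%N.
Proof.
move=> fD f_surj.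
have f0 : f 0 = 0 by apply: (addIr (f 0)); rewrite -fD !add0r.
have fibre w : #|[set v | f v == w]| = #|[set v | f v == 0]|.
  have [v0 <-] := f_surj w; rewrite -[RHS](card_imset _ (addIr v0)).
  apply: eq_card => v; rewrite inE; apply/idP/imsetP => [/eqP fv|[x]]; last first.
    by rewrite inE => /eqP fx ->; rewrite fD fx add0r.
  exists (v - v0); last by rewrite addrNK.
  by rewrite inE; apply/eqP; apply: (addIr (f v0)); rewrite -fD addrNK add0r.
have card_pre (T : {set W}) : #|f @^-1: T| = (#|T| * #|[set v | f v == 0%R]|)%N.
  rewrite -sum1_card (partition_big f (mem T)) /=; last by move=> i; rewrite inE.
  rewrite -sum_nat_const; apply: eq_bigr => w wT.
  rewrite -(fibre w) -sum1_card; apply: eq_bigl => v; rewrite !inE.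
  by apply/andP/eqP => [[_ /eqP]|fv] //; rewrite fv.
have := card_pre [set: W]; rewrite cardsT.
have -> : f @^-1: [set: W] = [set: V] by apply/finset.setP => v; rewrite !inE.
by rewrite cardsT card_pre => ->; rewrite mulnAC mulnA.
Qed.

Lemma card_bigcup_le (I T : finType) (J : pred I) (A : I -> {set T}) :
  (#|\bigcup_(i | J i) A i| <= \sum_(i | J i) #|A i|)%N.
Proof.
elim/big_rec2: _ => [|i B s _ IH]; first by rewrite cards0.
by rewrite (leq_trans (leq_card_setU _ _)) // leq_add2l.
Qed.

Lemma card_bigcup_mul_le (I T : finType) (J : pred I) (A : I -> {set T}) w a :
  (forall i, J i -> #|A i| * w = a)%N ->
  (#|\bigcup_(i | J i) A i| * w <= #|J| * a)%N.
Proof.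
move=> cardA; apply: leq_trans (leq_mul (card_bigcup_le J A) (leqnn w)) _.
by rewrite big_distrl /= (eq_bigr _ cardA) sum_nat_const.
Qed.

Lemma card_rowF2 n : #|{: 'rV[F2]_n}| = (2 ^ n)%N.
Proof. by rewrite card_mx card_Fp // mul1n. Qed.

Lemma card_mulmx_preim m n (c : 'rV[F2]_m) (S : {set 'rV[F2]_n}) : c != 0 ->
  (#|[set G : 'M[F2]_(m, n) | c *m G \in S]| * 2 ^ n
   = #|S| * #|{: 'M[F2]_(m, n)}|)%N.
Proof.
move=> cn0; rewrite -card_rowF2.
have -> : [set G | c *m G \in S] = mulmx c @^-1: S.
  by apply/finset.setP => G; rewrite !inE.
apply: card_preimset_additive => [G1 G2|y]; first exact: mulmxDr.
have [i ci] := rowF2_neq0 cn0.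
exists (\matrix_(r, j) (if r == i then y 0 j else 0)); apply/rowP => j.
rewrite !mxE (bigD1 i) //= big1 => [|r ri]; last by rewrite !mxE (negbTE ri) mulr0.
by rewrite !mxE eqxx ci mul1r addr0.
Qed.

Lemma card_usubmx_orth u k n (x : 'rV[F2]_n) : x != 0 ->
  (#|[set G : 'M[F2]_(u + k, n) | x *m (usubmx G)^T == 0%R]| * 2 ^ u
   = #|{: 'M[F2]_(u + k, n)}|)%N.
Proof.
move=> xn0; rewrite -card_rowF2.
have -> : [set G : 'M[F2]_(u + k, n) | x *m (usubmx G)^T == 0]
          = (fun G => x *m (usubmx G)^T) @^-1: [set 0].
  by apply/finset.setP => G; rewrite !inE.
rewrite card_preimset_additive ?cards1 ?mul1n // => [G1 G2|z] /=.
  by rewrite -mulmxDr -linearD /= -linearD.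
have [j xj] := rowF2_neq0 xn0.
exists (col_mx (\matrix_(r, l) (if l == j then z 0 r else 0)) 0).
rewrite col_mxKu; apply/rowP => r.
rewrite !mxE (bigD1 j) //= big1 => [|l lj]; last by rewrite !mxE (negbTE lj) mulr0.
by rewrite !mxE eqxx xj mul1r addr0.
Qed.

Lemma half_card_lt a b w M :
  (0 < M)%N -> (a * w <= b * M)%N -> (2 * b < w)%N -> (2 * a < M)%N.
Proof.
move=> M0 le_aw lt_bw; rewrite -(ltn_pmul2r (leq_ltn_trans (leq0n _) lt_bw)).
by rewrite -mulnA (leq_ltn_trans (leq_mul (leqnn 2) le_aw)) // mulnA mulnC ltn_pmul2l.
Qed.

(* A uniformly random G is bad with probability < 1/2 for each of the two
   requirements, so some G meets both. *)
Lemma exists_css_generator n u k t :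
  (2 * (2 ^ (u + k) * #|hamming_ball n t|) < 2 ^ n)%N ->
  (2 * #|hamming_ball n t| < 2 ^ u)%N ->
  exists G : 'M[F2]_(u + k, n),
    (forall c : 'rV[F2]_(u + k), c != 0 -> (t < hweight (c *m G))%N) /\
    (forall x : 'rV[F2]_n, x != 0 -> (hweight x <= t)%N -> x *m (usubmx G)^T != 0).
Proof.
set S := hamming_ball n t => hX hZ.
pose BX := \bigcup_(c : 'rV[F2]_(u + k) | c != 0) [set G | c *m G \in S].
pose BZ := \bigcup_(x in S :\ 0) [set G : 'M[F2]_(u + k, n) | x *m (usubmx G)^T == 0].
have M0 : (0 < #|{: 'M[F2]_(u + k, n)}|)%N by apply/card_gt0P; exists 0.
have cardBX : (2 * #|BX| < #|{: 'M[F2]_(u + k, n)}|)%N.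
  have := card_bigcup_mul_le (J := fun c : 'rV[F2]_(u + k) => c != 0)
            (fun c cn0 => card_mulmx_preim S cn0).
  rewrite mulnA => /(half_card_lt M0); apply; apply: leq_ltn_trans hX.
  by rewrite leq_mul2l leq_mul2r -card_rowF2 max_card !orbT.
have cardBZ : (2 * #|BZ| < #|{: 'M[F2]_(u + k, n)}|)%N.
  have := card_bigcup_mul_le (J := mem (S :\ 0))
            (fun x Sx => card_usubmx_orth u k (setD1P Sx).1).
  move=> /(half_card_lt M0); apply; apply: leq_ltn_trans hZ.
  by rewrite leq_mul2l subset_leq_card ?subsetDl ?orbT.
have /subsetPn [G _] : ~~ ([set: 'M[F2]_(u + k, n)] \subset BX :|: BZ).
  apply/negP => /subset_leq_card; rewrite cardsT leqNgt; apply/negP/negPn.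
  apply: leq_ltn_trans (leq_card_setU _ _) _.
  by move: #|BX| #|BZ| #|{: 'M[F2]_(u + k, n)}| cardBX cardBZ => a b N; lia.
rewrite inE negb_or => /andP [GnX GnZ]; exists G.
split => [c cn0|x xn0 wx]; [rewrite ltnNge | apply/negP => xG0].
  by apply: contra GnX => wc; apply/bigcupP; exists c; rewrite // inE inE.
by case/negP: GnZ; apply/bigcupP; exists x; rewrite ?inE ?xn0 ?xG0.
Qed.

Lemma card_hamming_ball_sets n t :
  #|hamming_ball n t| = #|[set A : {set 'I_n} | (#|A| <= t)%N]|.
Proof.
pose supp (y : 'rV[F2]_n) := [set j | y 0 j != 0].
have supp_inj : injective supp.
  move=> y y' /finset.setP eq_supp; apply/rowP => j; have := eq_supp j; rewrite !inE.
  by have [->|/F2_neq0 ->] := eqVneq (y 0 j) 0;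
     have [->|/F2_neq0 ->] := eqVneq (y' 0 j) 0; rewrite ?eqxx ?oner_eq0.
rewrite -(card_imset _ supp_inj); apply: eq_card => A; rewrite inE.
apply/imsetP/idP => [[y]|At]; first by rewrite inE => wy ->.
exists (\row_j ((j \in A)%:R : F2)); last first.
  by apply/finset.setP => j; rewrite !inE mxE; case: (j \in A); rewrite ?oner_eq0.
rewrite inE; apply: leq_trans At; apply: subset_leq_card.
by apply/fintype.subsetP => j; rewrite !inE mxE; case: (j \in A); rewrite ?eqxx.
Qed.

Lemma card_sets_le n t :
  #|[set A : {set 'I_n} | (#|A| <= t)%N]| = (\sum_(i < t.+1) 'C(n, i))%N.
Proof.
elim: t => [|t IH].
  rewrite big_ord1 bin0 -(cards1 (finset.set0 : {set 'I_n})); apply: eq_card => A.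
  by rewrite !inE leqn0 cards_eq0.
rewrite big_ord_recr /= -IH; have := card_draws 'I_n t.+1; rewrite card_ord => <-.
have -> : [set A : {set 'I_n} | (#|A| <= t.+1)%N]
          = [set A : {set 'I_n} | (#|A| <= t)%N] :|: [set A : {set 'I_n} | #|A| == t.+1].
  by apply/finset.setP => A; rewrite !inE leq_eqVlt ltnS orbC.
rewrite cardsU (_ : _ :&: _ = finset.set0) ?cards0 ?subn0 //.
by apply/finset.setP => A; rewrite !inE andbC; case: eqP => [->|]; rewrite ?ltnn.
Qed.

Lemma card_hamming_ball_mul_le n t q : (0 < q)%N -> (t <= n)%N ->
  (#|hamming_ball n t| * q ^ (n - t) <= (q + 1) ^ n)%N.
Proof.
move=> q_gt0 tn; rewrite card_hamming_ball_sets card_sets_le expnDn big_distrl /=.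
rewrite -(big_mkord xpredT (fun i => 'C(n, i) * (q ^ (n - i) * 1 ^ i)))%N.
rewrite [X in (_ <= X)%N](big_cat_nat _ (n := t.+1)) //=.
rewrite big_mkord; apply: leq_trans (leq_addr _ _); apply: leq_sum => i _.
by rewrite exp1n muln1 leq_mul2l leq_pexp2l ?leq_sub2l ?orbT // -ltnS.
Qed.

Lemma stabilizer_code_of_ball n t L :
  (#|hamming_ball n t| < 2 ^ L)%N -> (2 * L + 3 <= n)%N ->
  exists kk d, stabilizer_code_exists n kk d /\
    [/\ (n - 2 * L - 2 <= kk <= n)%N & (t < d <= n)%N].
Proof.
move=> VL Ln; have [k [k_gt0 n_eq]] : exists k, (0 < k)%N /\ n = (L.+1 + k + L.+1)%N.
  by exists (n - 2 * L - 2)%N; lia.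
have hZ : (2 * #|hamming_ball n t| < 2 ^ L.+1)%N by rewrite expnS ltn_pmul2l.
have hX : (2 * (2 ^ (L.+1 + k) * #|hamming_ball n t|) < 2 ^ n)%N.
  rewrite [X in (_ < 2 ^ X)%N]n_eq (expnD 2 (L.+1 + k)).
  move: (expn_gt0 2 (L.+1 + k)) hZ.
  by move: (2 ^ (L.+1 + k))%N (2 ^ L.+1)%N #|hamming_ball n t| => P Q V; nia.
have [G [wt_X wt_Z]] := exists_css_generator hX hZ.
have [kk [d [code [/andP [k_le kn] td]]]] := css_stabilizer_code wt_X wt_Z k_gt0.
by exists kk, d; split => //; rewrite kn andbT; lia.
Qed.

Lemma expR_inv3_le (R : realType) : expR (3^-1 : R) <= 3 / 2.
Proof.
have := expR_ge1Dx (- 3^-1 : R).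
rewrite expRN (_ : 1 - 3^-1 = 2 / 3 :> R); last by field.
rewrite -[expR _]invrK -[3 / 2 : R]invrK lef_pV2 ?posrE ?invr_gt0 ?expR_gt0 //; lra.
Qed.

Lemma expR_div3_le_exp2 (R : realType) (j : nat) : expR ((j%:R : R) / 3) <= 2 ^+ j.
Proof.
rewrite mulrC expRM_natr; apply: le_trans (lerXn2r j _ _ (expR_inv3_le R)) _.
- by rewrite nnegrE expR_ge0.
- by rewrite nnegrE; lra.
by apply: lerXn2r; rewrite ?nnegrE; lra.
Qed.

(* Taking logarithms: L <= t log2 (4^m) + n log2 (1 + 4^-m), and
   log2 (1 + x) <= 3 x by the two exponential bounds above. *)
Lemma log2_bound_of_volume (R : realType) (m n t L : nat) :
  (2 ^ L * (4 ^ m) ^ (n - t) <= (4 ^ m + 1) ^ n)%N -> (t <= n)%N ->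
  (L%:R : R) <= (2 * m * t)%:R + 3 * n%:R / (4 ^ m)%:R.
Proof.
move=> vol tn; set q : R := (4 ^ m)%:R.
have q_gt0 : 0 < q by rewrite ltr0n expn_gt0.
have [Lt|tL] := leqP L (2 * m * t).
  apply: le_trans (_ : ((2 * m * t)%:R : R) <= _); first by rewrite ler_nat.
  by rewrite lerDl divr_ge0 ?mulr_ge0 ?ler0n ?ltW.
set j := (L - 2 * m * t)%N; have L_eq : L = (2 * m * t + j)%N by rewrite /j; lia.
have volj : (2 ^ j * (4 ^ m) ^ n <= (4 ^ m + 1) ^ n)%N.
  move: vol; rewrite L_eq expnD (_ : 2 ^ (2 * m * t) = (4 ^ m) ^ t)%N; last first.
    by rewrite -!expnM -mulnA (expnM 2 2).
  by rewrite mulnAC mulnC -expnD subnKC.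
have exp2j : (2 : R) ^+ j <= expR (n%:R / q).
  have : (2 : R) ^+ j <= ((q + 1) / q) ^+ n.
    rewrite expr_div_n ler_pdivlMr ?exprn_gt0 //.
    move: volj; rewrite -(ler_nat R) natrM (natrX _ 2 j) (natrX _ (4 ^ m) n).
    by rewrite (natrX _ (4 ^ m + 1) n) natrD.
  move/le_trans; apply; rewrite [X in expR X]mulrC expRM_natr.
  apply: lerXn2r; rewrite ?nnegrE ?expR_ge0 ?divr_ge0 ?(ltW q_gt0) //; first lra.
  rewrite (_ : (q + 1) / q = 1 + q^-1); first exact: expR_ge1Dx.
  by field; lra.
have : (j%:R : R) / 3 <= n%:R / q.
  by rewrite -ler_expR; apply: le_trans (expR_div3_le_exp2 R j) exp2j.
by rewrite L_eq natrD lerD2l; lra.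
Qed.

Lemma good_stabilizer_code (R : realType) (m n : nat) (delta : R) :
  (0 < m)%N -> 0 <= delta ->
  (4 * m%:R * delta + 6 / (4 ^ m)%:R) * n%:R + 5 <= n%:R ->
  exists kk d, stabilizer_code_exists n kk d /\
    [/\ (1 - 4 * m%:R * delta - 6 / (4 ^ m)%:R) * n%:R - 4 <= kk%:R,
        delta * n%:R < d%:R, (kk <= n)%N & (d <= n)%N].
Proof.
move=> m_gt0 delta_ge0 len; set q : R := (4 ^ m)%:R; set X : R := n%:R.
have q_gt0 : 0 < q by rewrite ltr0n expn_gt0.
have b_ge0 : 0 <= 6 / q by rewrite divr_ge0 ?ler0n ?ltW.
have m_ge1 : 1 <= m%:R :> R by rewrite ler1n.
have X_ge0 : 0 <= X := ler0n R n.
set t := Num.truncn (delta * X).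
have tX : (t%:R : R) <= delta * X by rewrite truncn_le mulr_ge0.
have Xt : delta * X < t.+1%:R by apply: truncnS_gt.
have tn : (t <= n)%N by rewrite -(ler_nat R); apply: le_trans tX _; nra.
set V := #|hamming_ball n t|; set Lp := trunc_log 2 V.
have V_gt0 : (0 < V)%N by apply/card_gt0P; exists 0; rewrite inE hweight0.
have VL : (V < 2 ^ Lp.+1)%N by apply: trunc_log_ltn.
have Lp_le : (Lp%:R : R) <= (2 * m * t)%:R + 3 * X / q.
  apply: log2_bound_of_volume (tn).
  apply: leq_trans (card_hamming_ball_mul_le (expn_gt0 4 m) tn).
  by rewrite leq_mul2r trunc_logP ?orbT.
have mt : (2 * m * t)%:R <= 2 * m%:R * (delta * X) :> R.
  by rewrite !natrM; apply: ler_wpM2l; rewrite ?mulr_ge0 ?ler0n.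
have Ln : (2 * Lp.+1 + 3 <= n)%N.
  by rewrite -(ler_nat R) natrD natrM -addn1 natrD -/X; nra.
have [kk [d [code [/andP [kk_ge kn] /andP [td dn]]]]] :=
  stabilizer_code_of_ball VL Ln.
exists kk, d; split => //; split => //.
- move: kk_ge; rewrite -(ler_nat R); have -> : (n - 2 * Lp.+1 - 2)%N = (n - (2 * Lp + 4))%N by lia.
  rewrite natrB; last by lia.
  by rewrite natrD natrM -/X; nra.
- by apply: lt_le_trans Xt _; rewrite ler_nat.
Qed.

Lemma rate_gap_gt0 (R : realType) m :
  (2 <= m)%N -> 6 / (4 ^ m)%:R < 2 / (2 ^+ m - 1) :> R.
Proof.
move=> m2; set p : R := 2 ^+ m.
have p4 : 4 <= p.
  by rewrite /p (_ : 4 = 2 ^+ 2 :> R) ?ler_weXn2l //; [lra | rewrite expr2; lra].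
have -> : (4 ^ m)%:R = p * p :> R by rewrite natrX -exprMn; congr (_ ^+ _); lra.
rewrite ltr_pdivrMr; last by nra.
rewrite mulrAC ltr_pdivlMr; last by lra.
nra.
Qed.

Lemma good_stabilizer_code_ratio (R : realType) (m n : nat) (delta a : R) :
  (0 < m)%N -> 0 <= delta -> 4 * m%:R * delta <= 1 - a ->
  5 <= n%:R * (a - 6 / (4 ^ m)%:R) ->
  exists kk d, stabilizer_code_exists n kk d /\
    [/\ 1 - a - 4 * m%:R * delta <= kk%:R / n%:R,
        delta <= d%:R / n%:R, (kk <= n)%N & (d <= n)%N].
Proof.
move=> m_gt0 delta_ge0 delta_le len.
have X_gt0 : 0 < n%:R :> R.
  by rewrite ltr0n lt0n; apply: contraTneq len => ->; rewrite mul0r; lra.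
have [|kk [d [code [kk_ge d_gt kn dn]]]] :=
  good_stabilizer_code (n := n) m_gt0 delta_ge0.
  by have := ler_wpM2r (ltW X_gt0) delta_le; lra.
exists kk, d; split => //; split; rewrite ?ler_pdivlMr //; lra.
Qed.

Lemma good_stabilizer_codes_eventually (R : realType) (m : nat) (delta : R) :
  (2 <= m)%N -> 0 <= delta -> delta <= (4 * m%:R)^-1 * (1 - 2 / (2 ^+ m - 1)) ->
  exists N, forall n, (N <= n)%N -> exists kk d, stabilizer_code_exists n kk d /\
    [/\ 1 - 2 / (2 ^+ m - 1) - 4 * m%:R * delta <= kk%:R / n%:R,
        delta <= d%:R / n%:R, (kk <= n)%N & (d <= n)%N].
Proof.
move=> m2 delta_ge0 delta_le.
set s : R := 2 / (2 ^+ m - 1) - 6 / (4 ^ m)%:R.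
have s_gt0 : 0 < s by rewrite subr_gt0 rate_gap_gt0.
exists (Num.truncn (5 / s)).+1 => n Nn.
apply: good_stabilizer_code_ratio (ltnW m2) delta_ge0 _ _.
  have m4_gt0 : 0 < 4 * m%:R :> R by rewrite mulr_gt0 // ltr0n; lia.
  by rewrite mulrC -ler_pdivlMr // mulrC.
rewrite -ler_pdivrMr //; apply/ltW/(lt_le_trans (truncnS_gt _)).
by rewrite ler_nat.
Qed.

Lemma le_limn_inf (R : realType) (u : R^nat) (r : R) :
  bounded_fun u -> (forall i, r <= u i) -> r <= limn_inf u.
Proof.
move=> u_bnd u_ge; apply: limr_ge.
  apply: nondecreasing_is_cvgn; last exact: bounded_fun_has_ubound_infs.
  exact/nondecreasing_infs/bounded_fun_has_lbound.
apply: nearW => k; apply: lb_le_inf; first by exists (u k), k => /=.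
by move=> _ [j _ <-].
Qed.

Lemma bounded_fun_ratio (R : realType) (k n : nat -> nat) :
  (forall i, k i <= n i)%N -> bounded_fun (fun i => (k i)%:R / (n i)%:R : R).
Proof.
move=> kn; rewrite /bounded_near; near=> M => i _ /=.
rewrite ger0_norm ?divr_ge0 //; apply: le_trans (_ : 1 <= M); last first.
  by near: M; apply: nbhs_pinfty_ge.
have [->|n_gt0] := posnP (n i); first by rewrite invr0 mulr0.
by rewrite ler_pdivrMr ?ltr0n // mul1r ler_nat.
Unshelve. all: by end_near.
Qed.

Unset Implicit Arguments. Set Strict Implicit. Set Printing Implicit Defensive.
Local Open Scope classical_set_scope.

Theorem proposition4 (R : realType) (m : nat) (delta : R) :
  (2 <= m)%N ->
  0 <= delta ->
  delta <= (4 * m%:R)^-1 * (1 - 2 / (2 ^+ m - 1)) ->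
  exists (n k d : nat -> nat),
    (forall i, stabilizer_code_exists (n i) (k i) (d i)) /\
    ((n i)%:R : R) @[i --> \oo] --> +oo /\
    1 - 2 / (2 ^+ m - 1) - 4 * m%:R * delta
      <= limn_inf (fun i => (k i)%:R / (n i)%:R : R) /\
    delta <= limn_inf (fun i => (d i)%:R / (n i)%:R : R).
Proof.
move=> m2 delta_ge0 delta_le.
have [N codes] := good_stabilizer_codes_eventually m2 delta_ge0 delta_le.
have /choice [kd kdP] : forall i, exists kd : nat * nat,
    stabilizer_code_exists (i + N) kd.1 kd.2 /\
    [/\ 1 - 2 / (2 ^+ m - 1) - 4 * m%:R * delta <= kd.1%:R / (i + N)%:R,
        delta <= kd.2%:R / (i + N)%:R, (kd.1 <= i + N)%N & (kd.2 <= i + N)%N].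
  by move=> i; have [kk [d codeP]] := codes (i + N)%N (leq_addl _ _); exists (kk, d).
exists (fun i => i + N)%N, (fun i => (kd i).1), (fun i => (kd i).2).
split; first by move=> i; case: (kdP i).
split.
  apply/cvgrnyP/cvgnyPge => A.
  by exists A => // i /= Ai; apply: leq_trans Ai (leq_addr _ _).
split; apply: le_limn_inf => [|i]; try apply: bounded_fun_ratio => i;
  by case: (kdP i) => _ [].
Qed.
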